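(* For every cograph $(V,E)$ there are $d<\omega$ and an injective function $f:V\to(2^2)^d$ such that for all distinct $v_0,v_1\in V$: $v_0\mathrel{E}v_1$ if and only if $\{f(v_0),f(v_1)\}$ is an up-$1$-comb, and $\neg\, v_0\mathrel{E}v_1$ if and only if $\{f(v_0),f(v_1)\}$ is a wide right-$1$-comb.
   Context: Cographs: for graphs $G_0=(V_0,E_0),G_1=(V_1,E_1)$ on disjoint vertex sets, the coproduct is $(V_0\cup V_1,E_0\cup E_1)$ and the graph join is $(V_0\cup V_1,E_0\cup E_1\cup\{\{a,b\}:a\in V_0,b\in V_1\})$; cographs form the smallest class of graphs containing the one-vertex graph and closed (up to isomorphism) under coproducts and graph joins. $2^2=\{0,1\}^2$; $(2^2)^d$ is the set of sequences of length $d$ with entries in $2^2$, $(2^2)^{<d}$ those of length $<d$, $\tau^\frown a$ concatenation. For $A,B\subseteq(2^2)^d$: $A$ narrowly below $B$: some $\tau\in(2^2)^{<d}$, $i<2$ with all elements of $A$ extending $\tau^\frown(i,0)$ and all of $B$ extending $\tau^\frown(i,1)$; $A$ narrowly to the left of $B$: some $\tau$, $j<2$ with $A$'s extending $\tau^\frown(0,j)$ and $B$'s extending $\tau^\frown(1,j)$; $A$ widely to the left of $B$: some $\sigma$ with $A$'s extending $\sigma^\frown(0,0)$ or $\sigma^\frown(0,1)$ and $B$'s extending $\sigma^\frown(1,0)$ or $\sigma^\frown(1,1)$. Up-$1$-combs: smallest class of finite sets containing singletons and containing $A\cup B$ whenever $A,B$ are up-$1$-combs, $|A|\le 1$, $A$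 narrowly below $B$; right-$1$-combs likewise with narrowly left; wide right-$1$-combs: smallest class containing singletons and containing $A\cup B$ whenever $A,B$ are right-$1$-combs, $|A|\le1$, $A$ widely left of $B$. *)

From mathcomp Require Import all_boot.
Set Implicit Arguments. Unset Strict Implicit. Unset Printing Implicit Defensive.

Definition coprod_rel (T1 T2 : finType) (e1 : rel T1) (e2 : rel T2) : rel (T1 + T2) :=
  fun x y => match x, y with
             | inl a, inl b => e1 a b
             | inr a, inr b => e2 a b
             | _, _ => false
             end.

Definition join_rel (T1 T2 : finType) (e1 : rel T1) (e2 : rel T2) : rel (T1 + T2) :=
  fun x y => match x, y with
             | inl a, inl b => e1 a b
             | inr a, inr b => e2 a b
             | _, _ => true
             end.

Inductive cograph : forall T : finType, rel T -> Prop :=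
| cograph_single : cograph (fun _ _ : unit => false)
| cograph_iso (T1 T2 : finType) (e1 : rel T1) (e2 : rel T2) (f : T1 -> T2) :
    bijective f -> (forall x y, e2 (f x) (f y) = e1 x y) ->
    cograph e1 -> cograph e2
| cograph_coprod (T1 T2 : finType) (e1 : rel T1) (e2 : rel T2) :
    cograph e1 -> cograph e2 -> cograph (coprod_rel e1 e2)
| cograph_join (T1 T2 : finType) (e1 : rel T1) (e2 : rel T2) :
    cograph e1 -> cograph e2 -> cograph (join_rel e1 e2).

(** * Sequences in (2^2)^d, with 2^2 = bool * bool (false = 0, true = 1) *)

Notation seq22 d := (d.-tuple (bool * bool)).

Definition narrowly_below (d : nat) (A B : {set seq22 d}) : Prop :=
  exists (tau : seq (bool * bool)) (i : bool),
    size tau < d /\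
    (forall a, a \in A -> prefix (rcons tau (i, false)) a) /\
    (forall b, b \in B -> prefix (rcons tau (i, true)) b).

Definition narrowly_left (d : nat) (A B : {set seq22 d}) : Prop :=
  exists (tau : seq (bool * bool)) (j : bool),
    size tau < d /\
    (forall a, a \in A -> prefix (rcons tau (false, j)) a) /\
    (forall b, b \in B -> prefix (rcons tau (true, j)) b).

Definition widely_left (d : nat) (A B : {set seq22 d}) : Prop :=
  exists sigma : seq (bool * bool),
    (forall a, a \in A -> exists j : bool, prefix (rcons sigma (false, j)) a) /\
    (forall b, b \in B -> exists j : bool, prefix (rcons sigma (true, j)) b).

Inductive up1comb (d : nat) : {set seq22 d} -> Prop :=
| up1comb_single (x : seq22 d) : up1comb [set x]
| up1comb_union (A B : {set seq22 d}) :
    up1comb A -> up1comb B -> #|A| <= 1 -> narrowly_below A B ->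
    up1comb (A :|: B).

Inductive right1comb (d : nat) : {set seq22 d} -> Prop :=
| right1comb_single (x : seq22 d) : right1comb [set x]
| right1comb_union (A B : {set seq22 d}) :
    right1comb A -> right1comb B -> #|A| <= 1 -> narrowly_left A B ->
    right1comb (A :|: B).

(** wide right-1-combs: as in the paper, the parts A, B are right-1-combs *)
Inductive wide_right1comb (d : nat) : {set seq22 d} -> Prop :=
| wide_right1comb_single (x : seq22 d) : wide_right1comb [set x]
| wide_right1comb_union (A B : {set seq22 d}) :
    right1comb A -> right1comb B -> #|A| <= 1 -> widely_left A B ->
    wide_right1comb (A :|: B).

From mathcomp Require Import all_boot.
Set Implicit Arguments. Unset Strict Implicit. Unset Printing Implicit Defensive.

(* Encode a vertex of a cograph by the branch leading to it in its cotree: at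
   a coproduct node the two sides receive the letters (0,0) and (1,0), at a
   join node (0,0) and (0,1).  Two distinct codes then first differ at their
   lowest common node, and the pair is an up-1-comb when the letters there
   share their first coordinate (a join: adjacent vertices) and a wide
   right-1-comb otherwise (a coproduct: non-adjacent vertices). *)

(* At the first position where x and y differ, their letters have the same
   first coordinate; false when x = y or when no such position exists. *)
Fixpoint splits_vertically (x y : seq (bool * bool)) : bool :=
  match x, y with
  | a :: x', b :: y' => if a == b then splits_vertically x' y' else a.1 == b.1
  | _, _ => false
  end.

Lemma splits_verticallyC x y : splits_vertically x y = splits_vertically y x.
Proof.
elim: x y => [|a x IH] [|b y] //=.
by rewrite (eq_sym b a) (eq_sym b.1 a.1) IH.
Qed.

Lemma splits_vertically_rcons tau p q x y :
  p != q -> prefix (rcons tau p) x -> prefix (rcons tau q) y ->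
  splits_vertically x y = (p.1 == q.1).
Proof.
move=> npq; elim: tau x y => [|t tau IH] [|a x] [|b y] //=.
- by move=> /andP[/eqP <- _] /andP[/eqP <- _]; rewrite (negbTE npq).
- by move=> /andP[/eqP <- px] /andP[/eqP <- qy]; rewrite eqxx; exact: IH.
Qed.

Lemma prefix_rcons_inj (T : eqType) (tau : seq T) p q x :
  prefix (rcons tau p) x -> prefix (rcons tau q) x -> p = q.
Proof.
elim: tau x => [|t tau IH] [|a x] //=.
- by move=> /andP[/eqP <- _] /andP[/eqP].
- by move=> /andP[_ px] /andP[_ qx]; exact: IH px qx.
Qed.

Lemma first_difference (T : eqType) (x y : seq T) :
  size x = size y -> x != y ->
  exists tau p q, [/\ p != q, prefix (rcons tau p) x,
                      prefix (rcons tau q) y & size tau < size x].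
Proof.
elim: x y => [|a x IH] [|b y] //= [] size_xy.
case: (eqVneq a b) => [<-|nab].
- rewrite eqseq_cons eqxx => /IH[// | tau [p [q [npq px qy lt_tau]]]].
  by exists (a :: tau), p, q; rewrite /= eqxx.
- by exists [::], a, b; rewrite /= !eqxx !prefix0s.
Qed.

Lemma splits_vertically_pair d (x y a b : seq22 d) :
  a \in [set x; y] -> b \in [set x; y] -> a != b ->
  splits_vertically a b = splits_vertically x y.
Proof.
rewrite !inE => /orP[]/eqP-> /orP[]/eqP->; rewrite ?eqxx // => _.
exact: splits_verticallyC.
Qed.

Lemma set2_eq_set1 (T : finType) (x y z : T) : [set x; y] = [set z] -> x = y.
Proof.
move/(congr1 (fun S : {set T} => #|S|)); rewrite cards1 cards2.
by case: eqVneq.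
Qed.

Section Pairs.

Variable d : nat.
Implicit Types (x y a b : seq22 d) (A B : {set seq22 d}).

Lemma narrowly_below_splits A B a b :
  narrowly_below A B -> a \in A -> b \in B -> a != b /\ splits_vertically a b.
Proof.
move=> [tau [i [_ [pA qB]]]] aA bB.
have npq : (i, false) != (i, true) by rewrite xpair_eqE eqxx.
split; last by rewrite (splits_vertically_rcons npq (pA _ aA) (qB _ bB)).
by apply: contraNneq npq => eq_ab; apply/eqP/(prefix_rcons_inj (pA _ aA)); rewrite eq_ab qB.
Qed.

Lemma widely_left_splits A B a b :
  widely_left A B -> a \in A -> b \in B -> a != b /\ ~~ splits_vertically a b.
Proof.
move=> [sigma [pA qB]] aA bB.
have [j pa] := pA _ aA; have [j' qb] := qB _ bB.
have npq : (false, j) != (true, j') by rewrite xpair_eqE.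
split; last by rewrite (splits_vertically_rcons npq pa qb).
by apply: contraNneq npq => eq_ab; apply/eqP/(prefix_rcons_inj pa); rewrite eq_ab.
Qed.

Lemma narrowly_below_set1 x y : x != y -> splits_vertically x y ->
  narrowly_below [set x] [set y] \/ narrowly_below [set y] [set x].
Proof.
move=> nxy sxy.
have [|tau [[i j] [[i' j'] [npq px qy]]]] := first_difference _ nxy.
  by rewrite !size_tuple.
rewrite size_tuple => lt_tau.
move: sxy; rewrite (splits_vertically_rcons npq px qy) /= => /eqP eq_i; subst i'.
case: j j' npq px qy => [] []; rewrite ?eqxx // => _ px qy; [right | left];
  by exists tau, i; split; last split=> z /set1P ->.
Qed.

Lemma widely_left_set1 x y : x != y -> ~~ splits_vertically x y ->
  widely_left [set x] [set y] \/ widely_left [set y] [set x].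
Proof.
move=> nxy sxy.
have [|tau [[i j] [[i' j'] [npq px qy _]]]] := first_difference _ nxy.
  by rewrite !size_tuple.
move: sxy; rewrite (splits_vertically_rcons npq px qy) /=.
case: i i' npq px qy => [] [] // _ px qy _; [right | left];
  by exists tau; split=> z /set1P ->; eexists; eassumption.
Qed.

Lemma up1comb_nonempty A : up1comb A -> exists z, z \in A.
Proof.
by elim=> [z | A' B _ [z zA] _ _ _ _]; exists z; rewrite ?set11 // inE zA.
Qed.

Lemma right1comb_nonempty A : right1comb A -> exists z, z \in A.
Proof.
by elim=> [z | A' B _ [z zA] _ _ _ _]; exists z; rewrite ?set11 // inE zA.
Qed.

Lemma up1comb_pair x y : x != y -> up1comb [set x; y] <-> splits_vertically x y.
Proof.
move=> nxy; split.
- move Exy: [set x; y] => S comb; case: comb Exy => [z | A B combA combB _ belowAB] Exy.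
    by move: nxy; rewrite (set2_eq_set1 Exy) eqxx.
  have [a aA] := up1comb_nonempty combA; have [b bB] := up1comb_nonempty combB.
  have [nab sab] := narrowly_below_splits belowAB aA bB.
  by rewrite -(splits_vertically_pair _ _ nab) // Exy inE ?aA ?bB ?orbT.
- move=> sxy; have [below | below] := narrowly_below_set1 nxy sxy; last rewrite setUC;
  by apply: up1comb_union below; rewrite ?cards1 //; exact: up1comb_single.
Qed.

Lemma wide_right1comb_pair x y :
  x != y -> wide_right1comb [set x; y] <-> ~~ splits_vertically x y.
Proof.
move=> nxy; split.
- move Exy: [set x; y] => S comb; case: comb Exy => [z | A B combA combB _ leftAB] Exy.
    by move: nxy; rewrite (set2_eq_set1 Exy) eqxx.
  have [a aA] := right1comb_nonempty combA; have [b bB] := right1comb_nonempty combB.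
  have [nab sab] := widely_left_splits leftAB aA bB.
  by rewrite -(splits_vertically_pair _ _ nab) // Exy inE ?aA ?bB ?orbT.
- move=> sxy; have [left | left] := widely_left_set1 nxy sxy; last rewrite setUC;
  by apply: wide_right1comb_union left; rewrite ?cards1 //; exact: right1comb_single.
Qed.

End Pairs.

Definition encodes (T : finType) (e : rel T) d (f : T -> seq22 d) : Prop :=
  injective f /\
  forall v0 v1, v0 != v1 -> e v0 v1 = splits_vertically (f v0) (f v1).

(* Codes of every large enough length are required, so that the codes of the
   two parts of a coproduct or join can be given a common length. *)
Definition encodable (T : finType) (e : rel T) : Prop :=
  exists d0, forall d, d0 <= d -> exists f : T -> seq22 d, encodes e f.

Definition sum_rel (cross : bool) (T1 T2 : finType) (e1 : rel T1) (e2 : rel T2) :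
    rel (T1 + T2) :=
  fun x y => match x, y with
             | inl a, inl b => e1 a b
             | inr a, inr b => e2 a b
             | _, _ => cross
             end.

Lemma encodable_unit : encodable (fun _ _ : unit => false).
Proof.
by exists 0 => d _; exists (fun _ => [tuple of nseq d (false, false)]); split=> -[] [].
Qed.

Lemma encodable_iso (T1 T2 : finType) (e1 : rel T1) (e2 : rel T2) (f : T1 -> T2) :
  bijective f -> (forall x y, e2 (f x) (f y) = e1 x y) ->
  encodable e1 -> encodable e2.
Proof.
move=> [g fK gK] e_f [d0 enc1]; exists d0 => d /enc1[c [c_inj c_e1]].
exists (c \o g); split; first exact: inj_comp c_inj (can_inj gK).
move=> v0 v1 nv /=; rewrite -{1}(gK v0) -{1}(gK v1) e_f c_e1 //.
by rewrite (inj_eq (can_inj gK)).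
Qed.

Lemma encodable_sum_rel cross (T1 T2 : finType) (e1 : rel T1) (e2 : rel T2) :
  encodable e1 -> encodable e2 -> encodable (sum_rel cross e1 e2).
Proof.
move=> [d1 enc1] [d2 enc2]; exists (maxn d1 d2).+1 => -[|d] //.
rewrite ltnS geq_max => /andP[/enc1[c1 [c1_inj c1_e1]] /enc2[c2 [c2_inj c2_e2]]].
have nc : (~~ cross, cross) != (false, false) by rewrite xpair_eqE; case: cross.
exists (fun v => match v with
                 | inl a => cons_tuple (false, false) (c1 a)
                 | inr b => cons_tuple (~~ cross, cross) (c2 b)
                 end); split.
- move=> [a|a] [b|b] /(congr1 val) /= []; try by case: cross nc.
  + by move=> /val_inj /c1_inj ->.
  + by move=> /val_inj /c2_inj ->.
- move=> [a|a] [b|b] nab /=; try by case: cross nc.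
  + by rewrite c1_e1 //; apply: contraNneq nab => ->.
  + by rewrite eqxx c2_e2 //; apply: contraNneq nab => ->.
Qed.

Lemma cograph_encodable (T : finType) (e : rel T) : cograph e -> encodable e.
Proof.
elim=> {T e} [| T1 T2 e1 e2 f f_bij e_f _ | T1 T2 e1 e2 _ enc1 _ enc2
             | T1 T2 e1 e2 _ enc1 _ enc2].
- exact: encodable_unit.
- exact: encodable_iso f_bij e_f.
- exact: (encodable_sum_rel false enc1 enc2).
- exact: (encodable_sum_rel true enc1 enc2).
Qed.

Theorem lemma4p6 (T : finType) (e : rel T) :
  cograph e ->
  exists (d : nat) (f : T -> d.-tuple (bool * bool)),
    injective f /\
    forall v0 v1 : T, v0 != v1 ->
      (e v0 v1 <-> up1comb [set f v0; f v1]) /\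
      (~ e v0 v1 <-> wide_right1comb [set f v0; f v1]).
Proof.
move=> /cograph_encodable[d0 enc]; have [f [f_inj f_e]] := enc d0 (leqnn d0).
exists d0, f; split=> // v0 v1 nv.
have nf : f v0 != f v1 by rewrite (inj_eq f_inj).
rewrite f_e //; split; first exact: iff_sym (up1comb_pair nf).
exact: iff_trans (rwP negP) (iff_sym (wide_right1comb_pair nf)).
Qed.
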